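(* Let $\nu$ be a probability measure on $\mathcal S$. Consider (i) for all disjoint $A,B\subset\mathcal S$ with $\nu[A]\le\frac12$ and $\nu[B]\ge\frac12$: $\nu[A]\le C_{\mathrm{var}}\,\mathrm{cap}(A,B)$; (ii) $\mathrm{Var}_\nu[f]\le C_{\mathrm{PI}}\,\mathcal E(f)$ for all $f\in\ell^2(\mu)$. If (i) holds with $C_{\mathrm{var}}$ then (ii) holds with $C_{\mathrm{PI}}=4C_{\mathrm{var}}$; if (ii) holds with $C_{\mathrm{PI}}$ then (i) holds with $C_{\mathrm{var}}=2C_{\mathrm{PI}}$. In particular the optimal constants satisfy $\frac12C_{\mathrm{var}}\le C_{\mathrm{PI}}\le4C_{\mathrm{var}}$.
   Context: $\mathcal S$ countable; irreducible positive recurrent Markov chain with transition probabilities $p(x,y)$, reversible w.r.t. its invariant probability measure $\mu$; $\mathcal E(f)=\frac12\sum_{x,y}\mu(x)p(x,y)(f(x)-f(y))^2$; $\tau_A=\inf\{t>0:X(t)\in A\}$; $\mathrm{cap}(A,B)=\sum_{x\in A}\mu(x)\mathbb P_x[\tau_B<\tau_A]=\inf\{\mathcal E(g):g|_A=1,g|_B=0\}$, $\mathrm{cap}(\emptyset,B)=0$. *)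

From Stdlib Require Import Reals Lra List Relations ClassicalEpsilon.
Import ListNotations.
Open Scope R_scope.

Definition fsum {T : Type} (g : T -> R) (l : list T) : R :=
  fold_right (fun x acc => g x + acc) 0 l.

(* Unordered (net) summation over an arbitrary index type T:
   g has sum s iff the finite partial sums over duplicate-free lists
   converge to s along the directed set of finite subsets.
   For real-valued families this is exactly absolute summability. *)
Definition HasSum {T : Type} (g : T -> R) (s : R) : Prop :=
  forall eps : R, 0 < eps ->
    exists L : list T, NoDup L /\
      forall L' : list T, NoDup L' -> incl L L' -> Rabs (fsum g L' - s) < eps.

Definition Summable {T : Type} (g : T -> R) : Prop := exists s, HasSum g s.

(* The value of the sum (meaningful when Summable). *)
Definition sumS {T : Type} (g : T -> R) : R :=
  epsilon (inhabits 0) (fun s => HasSum g s).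

Definition countable (S : Type) : Prop :=
  exists code : S -> nat, forall x y, code x = code y -> x = y.

Definition stochastic {S : Type} (p : S -> S -> R) : Prop :=
  (forall x y, 0 <= p x y) /\ (forall x, HasSum (p x) 1).

Definition irreducible {S : Type} (p : S -> S -> R) : Prop :=
  forall x y, clos_trans S (fun a b => 0 < p a b) x y.

Definition prob_measure {S : Type} (nu : S -> R) : Prop :=
  (forall x, 0 <= nu x) /\ HasSum nu 1.

Definition invariant {S : Type} (p : S -> S -> R) (mu : S -> R) : Prop :=
  forall y, HasSum (fun x => mu x * p x y) (mu y).

Definition reversible {S : Type} (p : S -> S -> R) (mu : S -> R) : Prop :=
  forall x y, mu x * p x y = mu y * p y x.

Definition meas {S : Type} (nu : S -> R) (A : S -> bool) : R :=
  sumS (fun x => if A x then nu x else 0).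

Definition dir_term {S : Type} (p : S -> S -> R) (mu : S -> R) (f : S -> R)
  (xy : S * S) : R :=
  / 2 * mu (fst xy) * p (fst xy) (snd xy) * (f (fst xy) - f (snd xy)) ^ 2.

Definition dirichlet {S : Type} (p : S -> S -> R) (mu : S -> R) (f : S -> R) : R :=
  sumS (dir_term p mu f).

Definition l2 {S : Type} (mu : S -> R) (f : S -> R) : Prop :=
  Summable (fun x => mu x * f x ^ 2).

Definition is_inf (E : R -> Prop) (m : R) : Prop :=
  (forall e, E e -> m <= e) /\ (forall b, (forall e, E e -> b <= e) -> b <= m).

Definition cap_energies {S : Type} (p : S -> S -> R) (mu : S -> R)
  (A B : S -> bool) (e : R) : Prop :=
  exists g : S -> R,
    (forall x, A x = true -> g x = 1) /\
    (forall x, B x = true -> g x = 0) /\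
    HasSum (dir_term p mu g) e.

(* cap(A,B) = inf { E(g) : g|_A = 1, g|_B = 0 }  (Dirichlet principle);
   cap(emptyset, B) = 0. *)
Definition cap {S : Type} (p : S -> S -> R) (mu : S -> R) (A B : S -> bool) : R :=
  epsilon (inhabits 0) (fun c =>
    ((forall x, A x = false) /\ c = 0) \/
    (~ (forall x, A x = false) /\ is_inf (cap_energies p mu A B) c)).

Definition variance {S : Type} (nu : S -> R) (f : S -> R) : R :=
  sumS (fun x => nu x * f x ^ 2) - (sumS (fun x => nu x * f x)) ^ 2.

Definition cond_var {S : Type} (p : S -> S -> R) (mu nu : S -> R) (Cvar : R) : Prop :=
  forall A B : S -> bool,
    (forall x, A x = true -> B x = false) ->
    meas nu A <= / 2 -> / 2 <= meas nu B ->
    meas nu A <= Cvar * cap p mu A B.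

(* Condition (ii) with constant CPI; Var_nu[f] is finite is part of the
   inequality (an infinite variance cannot be bounded by a finite E(f)). *)
Definition cond_PI {S : Type} (p : S -> S -> R) (mu nu : S -> R) (CPI : R) : Prop :=
  forall f : S -> R, l2 mu f ->
    Summable (fun x => nu x * f x ^ 2) /\
    variance nu f <= CPI * dirichlet p mu f.

(* (ii) => (i): clamping a test function g with g|_A = 1, g|_B = 0 to [0,1] does not increase
   its energy, and for such a clamped h, Var_nu[h] >= (1 - c)^2 nu[A] + c^2 nu[B] >= nu[A] / 2
   (c the nu-mean of h) as soon as nu[A] <= 1/2 <= nu[B].

   (i) => (ii): around an approximate median m, f - m splits into two nonnegative parts g,
   each vanishing on a set B of nu-mass >= 1/2, so that (i) applies to ({g > t}, B) for
   every t > 0.  Cut g at geometric levels t_k = c rho^k: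
   nu[g^2] <= sum_k (rho^2 - 1) t_k^2 nu[g > t_k] + c^2, each nu[g > t_k] is at most
   Cvar E(min(1, g^2 / t_k^2)), and a discrete Cauchy-Schwarz estimate gives
   sum_k (rho^2 - 1) t_k^2 E(min(1, g^2 / t_k^2)) <= 4 rho^2 E(g).  Letting c -> 0 and
   rho -> 1 yields nu[g^2] <= 4 Cvar E(g); the energies of the two parts add up to at most E(f). *)

From Stdlib Require Import Reals Lra Lia Arith List Permutation.
From Stdlib Require Import Classical ClassicalEpsilon.
Import ListNotations.
Open Scope R_scope.

(** * Finite sums over lists *)

Lemma eq_dec_classic {T : Type} (x y : T) : {x = y} + {x <> y}.
Proof. apply excluded_middle_informative. Qed.

Section FiniteSums.
Context {T : Type}.
Implicit Types (g h : T -> R) (L : list T).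

Lemma fsum_app g L1 L2 : fsum g (L1 ++ L2) = fsum g L1 + fsum g L2.
Proof. induction L1 as [|a L1 IH]; simpl; [lra | rewrite IH; lra]. Qed.

Lemma fsum_ext g h L : (forall x, In x L -> g x = h x) -> fsum g L = fsum h L.
Proof.
  induction L as [|a L IH]; simpl; intros E; auto.
  rewrite E, IH; auto.
Qed.

Lemma fsum_le g h L : (forall x, In x L -> g x <= h x) -> fsum g L <= fsum h L.
Proof.
  induction L as [|a L IH]; simpl; intros E; [lra|].
  pose proof (E a (or_introl eq_refl)).
  pose proof (IH (fun x Hx => E x (or_intror Hx))). lra.
Qed.

Lemma fsum_plus g h L : fsum (fun x => g x + h x) L = fsum g L + fsum h L.
Proof. induction L; simpl; lra. Qed.

Lemma fsum_scal c g L : fsum (fun x => c * g x) L = c * fsum g L.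
Proof. induction L as [|a L IH]; simpl; [lra | rewrite IH; lra]. Qed.

Lemma fsum_nonneg g L : (forall x, 0 <= g x) -> 0 <= fsum g L.
Proof. intros H; induction L as [|a L IH]; simpl; [lra|]. pose proof (H a); lra. Qed.

Lemma fsum_perm g L L' : Permutation L L' -> fsum g L = fsum g L'.
Proof. induction 1; simpl; lra. Qed.

Lemma fsum_map {U : Type} g (f : U -> T) (L : list U) :
  fsum g (map f L) = fsum (fun u => g (f u)) L.
Proof. induction L as [|a L IH]; simpl; congruence. Qed.

Lemma fsum_sum_f_R0 (F : nat -> T -> R) n L :
  fsum (fun x => sum_f_R0 (fun k => F k x) n) L = sum_f_R0 (fun k => fsum (F k) L) n.
Proof. induction n as [|n IH]; simpl; auto. rewrite <- IH, <- fsum_plus. auto. Qed.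

Lemma fsum_incl_le g L L' : (forall x, 0 <= g x) -> NoDup L -> incl L L' ->
  fsum g L <= fsum g L'.
Proof.
  intros Hg HN. revert L'. induction HN as [|a L Ha HN IH]; intros L' Hi.
  - apply fsum_nonneg; auto.
  - destruct (in_split a L' (Hi a (or_introl eq_refl))) as [l1 [l2 ->]].
    rewrite (fsum_perm g (l1 ++ a :: l2) (a :: l1 ++ l2))
      by apply Permutation_sym, Permutation_middle.
    simpl. enough (fsum g L <= fsum g (l1 ++ l2)) by lra.
    apply IH. intros x Hx.
    destruct (in_app_or _ _ _ (Hi x (or_intror Hx))) as [H|[H|H]];
      apply in_or_app; subst; auto; contradiction.
Qed.

Lemma fsum_single_support_out g x L :
  (forall y, y <> x -> g y = 0) -> ~ In x L -> fsum g L = 0.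
Proof.
  intros Hg. induction L as [|a L IH]; simpl; intros Hx; auto.
  rewrite Hg, IH by tauto. lra.
Qed.

Lemma fsum_single_support_in g x L :
  (forall y, y <> x -> g y = 0) -> NoDup L -> In x L -> fsum g L = g x.
Proof.
  intros Hg N. induction N as [|a L Ha N IH]; simpl; intros Hx; [contradiction|].
  destruct (eq_dec_classic a x) as [->|Hax].
  - rewrite (fsum_single_support_out g x); auto. lra.
  - destruct Hx as [->|Hx]; [congruence|]. rewrite Hg, IH; auto. lra.
Qed.

Lemma fsum_single_support_le g x L :
  (forall y, y <> x -> g y = 0) -> 0 <= g x -> NoDup L -> fsum g L <= g x.
Proof.
  intros Hg Hx N. destruct (classic (In x L)).
  - rewrite (fsum_single_support_in g x); auto. lra.
  - rewrite (fsum_single_support_out g x); auto.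
Qed.

Definition nodup_union (L1 L2 : list T) : list T := nodup eq_dec_classic (L1 ++ L2).

Lemma NoDup_nodup_union L1 L2 : NoDup (nodup_union L1 L2).
Proof. apply NoDup_nodup. Qed.

Lemma incl_nodup_union_l L1 L2 : incl L1 (nodup_union L1 L2).
Proof. intros x Hx. apply nodup_In, in_or_app; auto. Qed.

Lemma incl_nodup_union_r L1 L2 : incl L2 (nodup_union L1 L2).
Proof. intros x Hx. apply nodup_In, in_or_app; auto. Qed.

End FiniteSums.

(** * Unordered summation *)

Section Summation.
Context {T : Type}.
Implicit Types (g h : T -> R).

Lemma HasSum_le g h a b : (forall x, g x <= h x) -> HasSum g a -> HasSum h b -> a <= b.
Proof.
  intros Hle Ha Hb. apply Rle_plus_epsilon. intros e He.
  destruct (Ha (e / 2) ltac:(lra)) as [L1 [_ H1]].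
  destruct (Hb (e / 2) ltac:(lra)) as [L2 [_ H2]].
  set (L := nodup_union L1 L2).
  specialize (H1 L (NoDup_nodup_union _ _) (incl_nodup_union_l _ _)).
  specialize (H2 L (NoDup_nodup_union _ _) (incl_nodup_union_r _ _)).
  assert (fsum g L <= fsum h L) by (apply fsum_le; auto).
  apply Rabs_def2 in H1. apply Rabs_def2 in H2. lra.
Qed.

Lemma HasSum_unique g s t : HasSum g s -> HasSum g t -> s = t.
Proof. intros Hs Ht. apply Rle_antisym; apply (HasSum_le g g); auto; intros; lra. Qed.

Lemma sumS_eq g s : HasSum g s -> sumS g = s.
Proof.
  intros H. apply (HasSum_unique g); auto.
  apply (epsilon_spec (inhabits 0) (fun s => HasSum g s)). exists s; auto.
Qed.

Lemma HasSum_sumS g : Summable g -> HasSum g (sumS g).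
Proof. intros [s H]. rewrite (sumS_eq g s H); auto. Qed.

Lemma HasSum_ext g h s : (forall x, g x = h x) -> HasSum g s -> HasSum h s.
Proof.
  intros E H e He. destruct (H e He) as [L [N HL]]. exists L; split; auto.
  intros L' N' I'. rewrite <- (fsum_ext g h); auto.
Qed.

Lemma HasSum_plus g h a b : HasSum g a -> HasSum h b -> HasSum (fun x => g x + h x) (a + b).
Proof.
  intros Ha Hb e He.
  destruct (Ha (e / 2) ltac:(lra)) as [L1 [_ H1]].
  destruct (Hb (e / 2) ltac:(lra)) as [L2 [_ H2]].
  exists (nodup_union L1 L2). split; [apply NoDup_nodup_union|]. intros L' N' I'.
  specialize (H1 L' N' (incl_tran (incl_nodup_union_l _ _) I')).
  specialize (H2 L' N' (incl_tran (incl_nodup_union_r _ _) I')).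
  rewrite fsum_plus.
  replace (fsum g L' + fsum h L' - (a + b)) with ((fsum g L' - a) + (fsum h L' - b)) by ring.
  eapply Rle_lt_trans; [apply Rabs_triang | lra].
Qed.

Lemma HasSum_scal c g a : HasSum g a -> HasSum (fun x => c * g x) (c * a).
Proof.
  intros Ha e He. pose proof (Rabs_pos c).
  destruct (Ha (e / (Rabs c + 1)) ltac:(apply Rdiv_lt_0_compat; lra)) as [L [N HL]].
  exists L; split; auto. intros L' N' I'. specialize (HL L' N' I').
  rewrite fsum_scal, <- Rmult_minus_distr_l, Rabs_mult.
  apply Rle_lt_trans with (Rabs c * (e / (Rabs c + 1))).
  - apply Rmult_le_compat_l; lra.
  - apply (Rmult_lt_reg_r (Rabs c + 1)); [lra|]. field_simplify; lra.
Qed.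

Lemma HasSum_0 : HasSum (fun _ : T => 0) 0.
Proof.
  intros e He. exists []. split; [constructor|]. intros L _ _.
  rewrite (fsum_ext _ (fun x => 0 * 0)), fsum_scal by (intros; ring).
  rewrite Rmult_0_l, Rminus_0_r, Rabs_R0; auto.
Qed.

Lemma fsum_le_HasSum g s L : (forall x, 0 <= g x) -> HasSum g s -> NoDup L -> fsum g L <= s.
Proof.
  intros Hg Hs N. apply Rle_plus_epsilon. intros e He.
  destruct (Hs e He) as [L0 [_ H0]].
  specialize (H0 _ (NoDup_nodup_union L0 L) (incl_nodup_union_l _ _)).
  assert (fsum g L <= fsum g (nodup_union L0 L))
    by (apply fsum_incl_le; auto; apply incl_nodup_union_r).
  apply Rabs_def2 in H0. lra.
Qed.

Lemma HasSum_nonneg g s : (forall x, 0 <= g x) -> HasSum g s -> 0 <= s.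
Proof. intros Hg Hs. apply (fsum_le_HasSum g s []); auto. constructor. Qed.

Lemma HasSum_of_bounded_fsum g M : (forall x, 0 <= g x) ->
  (forall L, NoDup L -> fsum g L <= M) -> exists s, HasSum g s /\ s <= M.
Proof.
  intros Hg HM.
  set (E := fun r => exists L, NoDup L /\ r = fsum g L).
  destruct (completeness E) as [s [Hub Hlub]].
  - exists M. intros r [L [N ->]]. auto.
  - exists 0, []. split; [constructor | auto].
  - exists s. split.
    + intros e He.
      assert (exists L, NoDup L /\ s - e < fsum g L) as [L [N HL]].
      { apply NNPP. intros Hn. enough (s <= s - e) by lra. apply Hlub.
        intros r [L [N ->]]. apply Rnot_lt_le. intros Hl. apply Hn. exists L; auto. }
      exists L. split; auto. intros L' N' I'.
      assert (fsum g L <= fsum g L') by (apply fsum_incl_le; auto).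
      assert (fsum g L' <= s) by (apply Hub; exists L'; auto).
      apply Rabs_def1; lra.
    + apply Hlub. intros r [L [N ->]]. auto.
Qed.

Lemma Summable_of_bounded_fsum g M : (forall x, 0 <= g x) ->
  (forall L, NoDup L -> fsum g L <= M) -> Summable g /\ sumS g <= M.
Proof.
  intros Hg HM. destruct (HasSum_of_bounded_fsum g M Hg HM) as [s [Hs Hle]].
  split; [exists s; auto | rewrite (sumS_eq g s); auto].
Qed.

Lemma Summable_le g h : (forall x, 0 <= g x <= h x) -> Summable h -> Summable g.
Proof.
  intros Hgh [s Hs].
  apply (Summable_of_bounded_fsum g s); [intros x; apply Hgh|]. intros L N.
  apply Rle_trans with (fsum h L); [apply fsum_le; intros; apply Hgh|].
  apply fsum_le_HasSum; auto. intros x. pose proof (Hgh x). lra.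
Qed.

Lemma Summable_dominated g h : (forall x, Rabs (g x) <= h x) -> Summable h -> Summable g.
Proof.
  intros Hd Hh.
  assert (Hparts : forall x, 0 <= Rmax (g x) 0 <= h x /\ 0 <= Rmax (- g x) 0 <= h x).
  { intros x. specialize (Hd x). unfold Rabs, Rmax in *.
    destruct (Rcase_abs (g x)), (Rle_dec (g x) 0), (Rle_dec (- g x) 0); lra. }
  destruct (Summable_le (fun x => Rmax (g x) 0) h) as [a Ha]; [apply Hparts | auto |].
  destruct (Summable_le (fun x => Rmax (- g x) 0) h) as [b Hb]; [apply Hparts | auto |].
  exists (a + -1 * b).
  eapply HasSum_ext; [|apply (HasSum_plus _ _ _ _ Ha (HasSum_scal (-1) _ _ Hb))].
  intros x. unfold Rmax. destruct (Rle_dec (g x) 0), (Rle_dec (- g x) 0); lra.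
Qed.

Lemma Summable_plus g h : Summable g -> Summable h -> Summable (fun x => g x + h x).
Proof. intros Hg Hh. exists (sumS g + sumS h). apply HasSum_plus; apply HasSum_sumS; auto. Qed.

Lemma Summable_scal c g : Summable g -> Summable (fun x => c * g x).
Proof. intros Hg. exists (c * sumS g). apply HasSum_scal, HasSum_sumS; auto. Qed.

Lemma sumS_nonneg g : (forall x, 0 <= g x) -> Summable g -> 0 <= sumS g.
Proof. intros H Hg. apply (HasSum_nonneg g); auto. apply HasSum_sumS; auto. Qed.

Lemma HasSum_single_support g x : (forall y, y <> x -> g y = 0) -> HasSum g (g x).
Proof.
  intros Hg e He. exists [x]. split; [repeat constructor; auto|].
  intros L' N' I'. rewrite (fsum_single_support_in g x); auto; [|apply I'; left; auto].
  rewrite Rminus_diag, Rabs_R0; auto.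
Qed.

Lemma HasSum_sum_f_R0 (F : nat -> T -> R) (a : nat -> R) n :
  (forall k, HasSum (F k) (a k)) -> HasSum (fun x => sum_f_R0 (fun k => F k x) n) (sum_f_R0 a n).
Proof. intros H. induction n as [|n IH]; simpl; auto. apply HasSum_plus; auto. Qed.

End Summation.

Section DoubleSums.
Context {T U : Type}.

Lemma fsum_list_prod (h : T * U -> R) (X : list T) (Y : list U) :
  fsum h (list_prod X Y) = fsum (fun x => fsum (fun y => h (x, y)) Y) X.
Proof.
  induction X as [|x X IH]; simpl; auto.
  rewrite fsum_app, fsum_map, IH. auto.
Qed.

Lemma fsum_pairs_le (h : T * U -> R) (r : T -> R) (M : R) :
  (forall q, 0 <= h q) ->
  (forall x Y, NoDup Y -> fsum (fun y => h (x, y)) Y <= r x) ->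
  (forall X, NoDup X -> fsum r X <= M) ->
  forall L, NoDup L -> fsum h L <= M.
Proof.
  intros Hh Hr HM L N.
  set (X := nodup eq_dec_classic (map fst L)).
  set (Y := nodup eq_dec_classic (map snd L)).
  apply Rle_trans with (fsum h (list_prod X Y)).
  - apply fsum_incl_le; auto. intros [x y] Hxy.
    apply in_prod_iff. unfold X, Y. rewrite !nodup_In. split.
    + apply (in_map fst L (x, y)); auto.
    + apply (in_map snd L (x, y)); auto.
  - rewrite fsum_list_prod. apply Rle_trans with (fsum r X).
    + apply fsum_le. intros x _. apply Hr, NoDup_nodup.
    + apply HM, NoDup_nodup.
Qed.

Lemma fsum_swap_le (h : U * T -> R) (M : R) :
  (forall L, NoDup L -> fsum h L <= M) ->
  forall L : list (T * U), NoDup L -> fsum (fun q => h (snd q, fst q)) L <= M.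
Proof.
  intros H L N. rewrite <- fsum_map. apply H, FinFun.Injective_map_NoDup; auto.
  intros [a b] [c d] E. injection E. congruence.
Qed.

End DoubleSums.

(** * Measures, Dirichlet form and capacity *)

Section Measure.
Context {St : Type} (nu : St -> R) (Hnu : prob_measure nu).

Definition restr (A : St -> bool) (x : St) : R := if A x then nu x else 0.

Lemma prob_nonneg x : 0 <= nu x.
Proof. apply Hnu. Qed.

Lemma Summable_prob : Summable nu.
Proof. exists 1. apply Hnu. Qed.

Lemma fsum_prob_le_1 L : NoDup L -> fsum nu L <= 1.
Proof. apply fsum_le_HasSum; [apply prob_nonneg | apply Hnu]. Qed.

Lemma restr_bounds A x : 0 <= restr A x <= nu x.
Proof. unfold restr. pose proof (prob_nonneg x). destruct (A x); lra. Qed.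

Lemma HasSum_meas A : HasSum (restr A) (meas nu A).
Proof. apply HasSum_sumS, (Summable_le _ nu); [apply restr_bounds | apply Summable_prob]. Qed.

Lemma meas_nonneg A : 0 <= meas nu A.
Proof. apply (HasSum_nonneg (restr A)); [apply restr_bounds | apply HasSum_meas]. Qed.

Lemma meas_add_compl A : meas nu A + meas nu (fun x => negb (A x)) = 1.
Proof.
  apply (HasSum_unique nu); [|apply Hnu].
  eapply HasSum_ext; [|apply (HasSum_plus _ _ _ _ (HasSum_meas A) (HasSum_meas _))].
  intros x. unfold restr. destruct (A x); simpl; lra.
Qed.

Lemma meas_mono A B : (forall x, A x = true -> B x = true) -> meas nu A <= meas nu B.
Proof.
  intros H. apply (HasSum_le (restr A) (restr B)); try apply HasSum_meas.
  intros x. unfold restr. specialize (H x). pose proof (prob_nonneg x).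
  destruct (A x); [rewrite H; auto; lra | destruct (B x); lra].
Qed.

Lemma meas_empty A : (forall x, A x = false) -> meas nu A = 0.
Proof.
  intros HA. apply (HasSum_unique (restr A)); [apply HasSum_meas|].
  eapply HasSum_ext; [|apply HasSum_0]. intros x. unfold restr. rewrite HA. auto.
Qed.

Lemma fsum_restr_le_meas A L : NoDup L -> fsum (restr A) L <= meas nu A.
Proof. apply fsum_le_HasSum; [apply restr_bounds | apply HasSum_meas]. Qed.

Lemma meas_singleton x : meas nu (fun y => if eq_dec_classic y x then true else false) = nu x.
Proof.
  set (A := fun y => if eq_dec_classic y x then true else false).
  replace (nu x) with (restr A x) by (unfold restr, A; destruct (eq_dec_classic x x); tauto).
  apply (HasSum_unique (restr A)); [apply HasSum_meas|].
  apply HasSum_single_support. intros y Hy. unfold restr, A.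
  destruct (eq_dec_classic y x); tauto.
Qed.

End Measure.

Section Dirichlet.
Context {St : Type} (p : St -> St -> R) (mu : St -> R)
  (Hp : stochastic p) (Hmu : prob_measure mu) (Hrev : reversible p mu).

Lemma p_nonneg x y : 0 <= p x y.
Proof. apply Hp. Qed.

Lemma mu_p_nonneg x y : 0 <= mu x * p x y.
Proof. apply Rmult_le_pos; [apply (prob_nonneg mu Hmu) | apply p_nonneg]. Qed.

Lemma dir_term_nonneg f q : 0 <= dir_term p mu f q.
Proof.
  unfold dir_term. pose proof (mu_p_nonneg (fst q) (snd q)).
  pose proof (pow2_ge_0 (f (fst q) - f (snd q))). nra.
Qed.

(* By reversibility the edge (x, y) can be charged to either endpoint, so the energy
   is controlled by one row sum per state. *)
Lemma dirichlet_le_of_vertex_bound f (w : St -> R) (M : R) :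
  (forall x, 0 <= w x) -> (forall x y, (f x - f y) ^ 2 <= w x + w y) ->
  (forall X, NoDup X -> fsum (fun x => mu x * w x) X <= M) ->
  Summable (dir_term p mu f) /\ dirichlet p mu f <= M.
Proof.
  intros Hw Hf HM.
  set (h := fun q : St * St => / 2 * (mu (fst q) * p (fst q) (snd q)) * w (fst q)).
  assert (Hh : forall q, 0 <= h q).
  { intros q. unfold h. pose proof (mu_p_nonneg (fst q) (snd q)). pose proof (Hw (fst q)). nra. }
  assert (Hrows : forall L, NoDup L -> fsum h L <= M / 2).
  { apply (fsum_pairs_le h (fun x => / 2 * (mu x * w x))); auto.
    - intros x Y N. unfold h. simpl.
      rewrite (fsum_ext _ (fun y => / 2 * (mu x * w x) * p x y)) by (intros; ring).
      rewrite fsum_scal. pose proof (fsum_le_HasSum (p x) 1 Y (p_nonneg x) (proj2 Hp x) N).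
      assert (0 <= mu x * w x) by (apply Rmult_le_pos; [apply (prob_nonneg mu Hmu) | apply Hw]).
      nra.
    - intros X N. rewrite fsum_scal. pose proof (HM X N). lra. }
  replace M with (M / 2 + M / 2) by field.
  apply Summable_of_bounded_fsum; [apply dir_term_nonneg|]. intros L N.
  apply Rle_trans with (fsum (fun q => h q + h (snd q, fst q)) L).
  - apply fsum_le. intros [x y] _. unfold h, dir_term. simpl. rewrite (Hrev y x).
    pose proof (mu_p_nonneg x y). pose proof (Hf x y). nra.
  - rewrite fsum_plus. pose proof (Hrows L N). pose proof (fsum_swap_le h _ Hrows L N). lra.
Qed.

Lemma Summable_dir_term f : l2 mu f -> Summable (dir_term p mu f).
Proof.
  intros Hf.
  apply (dirichlet_le_of_vertex_bound f (fun x => 2 * f x ^ 2) (2 * sumS (fun x => mu x * f x ^ 2))).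
  - intros x. pose proof (pow2_ge_0 (f x)). lra.
  - intros x y. pose proof (pow2_ge_0 (f x + f y)). nra.
  - intros X N. rewrite (fsum_ext _ (fun x => 2 * (mu x * f x ^ 2))), fsum_scal by (intros; ring).
    apply Rmult_le_compat_l; [lra|]. apply fsum_le_HasSum; [|apply HasSum_sumS, Hf | auto].
    intros x. pose proof (prob_nonneg mu Hmu x). pose proof (pow2_ge_0 (f x)). nra.
Qed.

Lemma dirichlet_nonneg f : l2 mu f -> 0 <= dirichlet p mu f.
Proof. intros Hf. apply sumS_nonneg; [apply dir_term_nonneg | apply Summable_dir_term; auto]. Qed.

Lemma l2_bounded u K : (forall x, Rabs (u x) <= K) -> l2 mu u.
Proof.
  intros H. apply (Summable_dominated _ (fun x => K ^ 2 * mu x)).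
  - intros x. pose proof (prob_nonneg mu Hmu x). pose proof (H x). pose proof (Rabs_pos (u x)).
    assert (u x ^ 2 <= K ^ 2) by (rewrite <- (pow2_abs (u x)); apply pow_incr; lra).
    rewrite Rabs_right by (apply Rle_ge, Rmult_le_pos; auto; apply pow2_ge_0). nra.
  - apply Summable_scal, (Summable_prob mu Hmu).
Qed.

Lemma dirichlet_indicator_le x0 :
  dirichlet p mu (fun y => if eq_dec_classic y x0 then 1 else 0) <= mu x0.
Proof.
  set (w := fun y => if eq_dec_classic y x0 then 1 else 0).
  apply (dirichlet_le_of_vertex_bound w w).
  - intros y. unfold w. destruct (eq_dec_classic y x0); lra.
  - intros x y. unfold w. destruct (eq_dec_classic x x0), (eq_dec_classic y x0); lra.
  - intros X N.
    replace (mu x0) with (mu x0 * w x0)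
      by (unfold w; destruct (eq_dec_classic x0 x0); [ring | tauto]).
    apply (fsum_single_support_le (fun x => mu x * w x)); auto.
    + intros y Hy. unfold w. destruct (eq_dec_classic y x0); [tauto | ring].
    + unfold w. destruct (eq_dec_classic x0 x0); [|tauto]. pose proof (prob_nonneg mu Hmu x0). lra.
Qed.

Lemma sum_dirichlet_le (u : nat -> St -> R) (w : nat -> R) f n K :
  (forall k, Summable (dir_term p mu (u k))) -> Summable (dir_term p mu f) ->
  (forall x y, sum_f_R0 (fun k => w k * (u k x - u k y) ^ 2) n <= K * (f x - f y) ^ 2) ->
  sum_f_R0 (fun k => w k * dirichlet p mu (u k)) n <= K * dirichlet p mu f.
Proof.
  intros Hu Hf Hedge.
  apply (HasSum_le (fun q => sum_f_R0 (fun k => w k * dir_term p mu (u k) q) n)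
                   (fun q => K * dir_term p mu f q) _ (K * dirichlet p mu f)).
  - intros [x y]. unfold dir_term. cbn [fst snd].
    rewrite (sum_eq _ (fun k => w k * (u k x - u k y) ^ 2 * (/ 2 * mu x * p x y)))
      by (intros; ring).
    rewrite <- scal_sum. pose proof (mu_p_nonneg x y). pose proof (Hedge x y).
    replace (K * (/ 2 * mu x * p x y * (f x - f y) ^ 2))
      with (/ 2 * mu x * p x y * (K * (f x - f y) ^ 2)) by ring.
    apply Rmult_le_compat_l; [lra | auto].
  - apply (HasSum_sum_f_R0 (fun k q => w k * dir_term p mu (u k) q)).
    intros k. apply HasSum_scal, HasSum_sumS; auto.
  - apply HasSum_scal, HasSum_sumS; auto.
Qed.

Lemma cap_empty A B : (forall x, A x = false) -> cap p mu A B = 0.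
Proof.
  intros HA. unfold cap.
  destruct (epsilon_spec (inhabits 0) (fun c => ((forall x, A x = false) /\ c = 0) \/
    (~ (forall x, A x = false) /\ is_inf (cap_energies p mu A B) c))) as [[_ H]|[H _]];
    [exists 0; left; auto | auto | contradiction].
Qed.

Lemma cap_is_inf A B : (exists x, A x = true) -> (exists e, cap_energies p mu A B e) ->
  is_inf (cap_energies p mu A B) (cap p mu A B).
Proof.
  intros [x0 Hx0] [e0 He0].
  assert (Hne : ~ (forall x, A x = false)) by (intros H; rewrite H in Hx0; discriminate).
  assert (Hex : exists c, is_inf (cap_energies p mu A B) c).
  { set (E := fun r => cap_energies p mu A B (- r)).
    destruct (completeness E) as [s [Hub Hlub]].
    - exists 0. intros r [g [_ [_ Hg]]].
      pose proof (HasSum_nonneg _ _ (dir_term_nonneg g) Hg). lra.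
    - exists (- e0). unfold E. rewrite Ropp_involutive. auto.
    - exists (- s). split.
      + intros e He. enough (- e <= s) by lra. apply Hub. unfold E. rewrite Ropp_involutive. auto.
      + intros b Hb. enough (s <= - b) by lra. apply Hlub. intros r Hr. specialize (Hb _ Hr). lra. }
  unfold cap.
  destruct (epsilon_spec (inhabits 0) (fun c => ((forall x, A x = false) /\ c = 0) \/
    (~ (forall x, A x = false) /\ is_inf (cap_energies p mu A B) c))) as [[H _]|[_ H]];
    [destruct Hex as [c Hc]; exists c; right; auto | contradiction | auto].
Qed.

Lemma cap_le_dirichlet A B g : (forall x, A x = true -> g x = 1) ->
  (forall x, B x = true -> g x = 0) -> l2 mu g -> cap p mu A B <= dirichlet p mu g.
Proof.
  intros H1 H0 Hg.
  assert (Hg' : cap_energies p mu A B (dirichlet p mu g))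
    by (exists g; repeat split; auto; apply HasSum_sumS, Summable_dir_term; auto).
  destruct (classic (exists x, A x = true)) as [Hx|Hn].
  - apply (cap_is_inf A B Hx); eauto.
  - rewrite cap_empty; [apply dirichlet_nonneg; auto|].
    intros x. destruct (A x) eqn:E; auto. exfalso; eauto.
Qed.

Lemma le_scaled_cap A B (X K : R) : 0 <= K -> (exists x, A x = true) ->
  (forall x, A x = true -> B x = false) ->
  (forall e, cap_energies p mu A B e -> X <= K * e) -> X <= K * cap p mu A B.
Proof.
  intros HK Hne Hd HX.
  set (g := fun x => if A x then 1 else 0).
  assert (Hg : cap_energies p mu A B (dirichlet p mu g)).
  { exists g. repeat split.
    - intros x Hx. unfold g. rewrite Hx. auto.
    - intros x Hx. unfold g. destruct (A x) eqn:E; auto. rewrite (Hd x E) in Hx. discriminate.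
    - apply HasSum_sumS, Summable_dir_term, (l2_bounded g 1).
      intros x. unfold g. destruct (A x); rewrite ?Rabs_R1, ?Rabs_R0; lra. }
  destruct (Req_dec K 0) as [->|HK0].
  - pose proof (HX _ Hg). lra.
  - destruct (cap_is_inf A B Hne (ex_intro _ _ Hg)) as [_ Hglb].
    enough (X / K <= cap p mu A B) by
      (apply (Rmult_le_compat_l K) in H; [|lra]; field_simplify in H; lra).
    apply Hglb. intros e He. pose proof (HX e He).
    apply (Rmult_le_reg_l K); [lra|]. field_simplify; lra.
Qed.

End Dirichlet.

(** * Cutoffs at geometric levels *)

Lemma one_sided_lipschitz_glue (F : R -> R) (K : R) (s : nat -> R) (n : nat) :
  (forall a b, 0 <= a <= b -> b <= s 0%nat -> F b - F a <= K * (b - a)) ->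
  (forall j a b, (j < n)%nat -> s j <= a <= b -> b <= s (S j) -> F b - F a <= K * (b - a)) ->
  (forall a b, s n <= a <= b -> F b - F a <= K * (b - a)) ->
  forall a b, 0 <= a <= b -> F b - F a <= K * (b - a).
Proof.
  intros H0 Hcell Hlast.
  assert (Hbelow : forall j, (j <= n)%nat -> forall a b, 0 <= a <= b -> b <= s j ->
            F b - F a <= K * (b - a)).
  { induction j as [|j IH]; intros Hj a b Hab Hb; auto.
    destruct (Rle_dec b (s j)); [apply IH; auto; lia|].
    destruct (Rle_dec (s j) a); [apply (Hcell j); [lia | lra | auto]|].
    pose proof (IH ltac:(lia) a (s j) ltac:(lra) ltac:(lra)).
    pose proof (Hcell j (s j) b ltac:(lia) ltac:(lra) Hb). lra. }
  intros a b Hab.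
  destruct (Rle_dec b (s n)); [apply (Hbelow n); auto|].
  destruct (Rle_dec (s n) a); [apply Hlast; lra|].
  pose proof (Hbelow n (le_n n) a (s n) ltac:(lra) ltac:(lra)).
  pose proof (Hlast (s n) b ltac:(lra)). lra.
Qed.

Definition cutoff (t x : R) : R := Rmin 1 (x ^ 2 / t ^ 2).

Lemma cutoff_eq t x : 0 < t -> 0 <= x -> cutoff t x = Rmin t x ^ 2 / t ^ 2.
Proof.
  intros Ht Hx. unfold cutoff. assert (Ht2 : 0 < t ^ 2) by (apply pow_lt; auto).
  assert (Hle1 : forall y, 0 <= y <= t -> y ^ 2 / t ^ 2 <= 1).
  { intros y Hy. apply (Rmult_le_reg_r (t ^ 2)); auto. unfold Rdiv.
    rewrite Rmult_assoc, Rinv_l, Rmult_1_r, Rmult_1_l by lra. apply pow_incr; lra. }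
  destruct (Rle_dec x t).
  - rewrite (Rmin_right t x), Rmin_right; auto.
  - rewrite (Rmin_left t x) by lra. rewrite Rmin_left; [field; lra|].
    replace 1 with (t ^ 2 / t ^ 2) at 1 by (field; lra).
    unfold Rdiv. apply Rmult_le_compat_r; [apply Rlt_le, Rinv_0_lt_compat; auto|].
    apply pow_incr; lra.
Qed.

Lemma cutoff_bounds t x : 0 < t -> 0 <= cutoff t x <= 1.
Proof.
  intros Ht. unfold cutoff. split; [|apply Rmin_l].
  apply Rmin_glb; [lra|]. apply Rmult_le_pos; [apply pow2_ge_0|].
  apply Rlt_le, Rinv_0_lt_compat, pow_lt; auto.
Qed.

Lemma cutoff_eq_1 t x : 0 < t -> t < x -> cutoff t x = 1.
Proof.
  intros Ht Hx. rewrite cutoff_eq, Rmin_left by lra. field. lra.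
Qed.

Lemma cutoff_0 t : 0 < t -> cutoff t 0 = 0.
Proof. intros Ht. rewrite cutoff_eq, Rmin_right by lra. field. lra. Qed.

(* Discrete Cauchy-Schwarz: (B^2 - A^2)^2 = (int_A^B 2x dx)^2 <= (B - A) int_A^B 4x^2 dx. *)
Lemma cutoff_diff_sq_le t a b : 0 < t -> 0 <= a <= b ->
  t ^ 4 * (cutoff t b - cutoff t a) ^ 2 <= 4 / 3 * (b - a) * (Rmin t b ^ 3 - Rmin t a ^ 3).
Proof.
  intros Ht Hab. rewrite !cutoff_eq by lra.
  set (A := Rmin t a). set (B := Rmin t b).
  assert (HA : 0 <= A <= B) by (unfold A, B, Rmin; destruct (Rle_dec t a), (Rle_dec t b); lra).
  assert (HBA : B - A <= b - a) by (unfold A, B, Rmin; destruct (Rle_dec t a), (Rle_dec t b); lra).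
  replace (t ^ 4 * (B ^ 2 / t ^ 2 - A ^ 2 / t ^ 2) ^ 2) with ((B ^ 2 - A ^ 2) ^ 2) by (field; lra).
  assert (HCS : (B ^ 2 - A ^ 2) ^ 2 + / 3 * ((B - A) ^ 2) ^ 2 = 4 / 3 * (B - A) * (B ^ 3 - A ^ 3))
    by field.
  assert (H3 : 0 <= B ^ 3 - A ^ 3).
  { replace (B ^ 3 - A ^ 3) with ((B - A) * (B ^ 2 + A * B + A ^ 2)) by ring.
    apply Rmult_le_pos; nra. }
  assert (4 / 3 * (B - A) * (B ^ 3 - A ^ 3) <= 4 / 3 * (b - a) * (B ^ 3 - A ^ 3))
    by (apply Rmult_le_compat_r; lra).
  pose proof (pow2_ge_0 ((B - A) ^ 2)). lra.
Qed.

Section Levels.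
Variables (rho c : R).
Hypothesis Hrho : 1 < rho.
Hypothesis Hc : 0 < c.

Definition level (k : nat) : R := c * rho ^ k.

Definition level_weight (k : nat) : R := (rho ^ 2 - 1) * level k ^ 2.

Lemma level_pos k : 0 < level k.
Proof. unfold level. apply Rmult_lt_0_compat; auto. apply pow_lt; lra. Qed.

Lemma level_le k l : (k <= l)%nat -> level k <= level l.
Proof. intros H. unfold level. apply Rmult_le_compat_l; [lra|]. apply Rle_pow; auto; lra. Qed.

Lemma level_S k : level (S k) = rho * level k.
Proof. unfold level. simpl. ring. Qed.

Lemma rho_sq_sub_1_pos : 0 < rho ^ 2 - 1.
Proof. nra. Qed.

Lemma level_weight_nonneg k : 0 <= level_weight k.
Proof. apply Rmult_le_pos; [pose proof rho_sq_sub_1_pos; lra | apply pow2_ge_0]. Qed.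

Lemma level_unbounded y : exists n, y <= level (S n).
Proof.
  destruct (Pow_x_infinity rho ltac:(rewrite Rabs_right; lra) (y / c)) as [N HN].
  exists N. specialize (HN (S N) ltac:(lia)).
  rewrite Rabs_right in HN by (apply Rle_ge, pow_le; lra).
  unfold level. apply (Rmult_le_reg_r (/ c)); [apply Rinv_0_lt_compat; auto|].
  replace (c * rho ^ S N * / c) with (rho ^ S N) by (field; lra). unfold Rdiv in HN. lra.
Qed.

Definition tail_weight (m k : nat) : R :=
  if le_dec m k then (rho ^ 2 - 1) * level m ^ 2 / level k ^ 2 else 0.

(* [(rho^2 - 1) t_m^2 / t_k^2 = t_m^2 / t_(k-1)^2 - t_m^2 / t_k^2] telescopes. *)
Lemma tail_weight_sum m n :
  ((n < m)%nat -> sum_f_R0 (tail_weight m) n = 0) /\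
  ((m <= n)%nat -> sum_f_R0 (tail_weight m) n = rho ^ 2 - rho ^ 2 * level m ^ 2 / level (S n) ^ 2).
Proof.
  pose proof (level_pos m). unfold tail_weight.
  induction n as [|n [IH1 IH2]].
  - cbn [sum_f_R0]. destruct (le_dec m 0); split; intros; try lia; auto.
    assert (m = 0%nat) by lia. subst. rewrite level_S. field. lra.
  - rewrite tech5. pose proof (level_pos (S n)). rewrite (level_S (S n)).
    destruct (le_dec m (S n)); split; intros; try lia.
    + destruct (le_dec m n).
      * rewrite IH2 by auto. field. lra.
      * assert (m = S n) by lia. subst. rewrite IH1 by lia. field. lra.
    + rewrite IH1 by lia. lra.
Qed.

Lemma tail_weight_sum_le m n : sum_f_R0 (tail_weight m) n <= rho ^ 2.
Proof.
  destruct (tail_weight_sum m n) as [H1 H2]. pose proof (pow2_ge_0 rho).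
  destruct (le_lt_dec m n); [rewrite H2 by auto | rewrite H1 by auto; lra].
  pose proof (level_pos m). pose proof (level_pos (S n)).
  assert (0 <= rho ^ 2 * level m ^ 2 / level (S n) ^ 2); [|lra].
  apply Rmult_le_pos; [apply Rmult_le_pos; apply pow2_ge_0|].
  apply Rlt_le, Rinv_0_lt_compat, pow_lt; auto.
Qed.

(* An antiderivative of [x |-> 3 (rho^2 - 1) (x / t_k)^2 1_(x < t_k)]; summed over k it has
   slope at most [3 rho^2]. *)
Definition level_potential (k : nat) (x : R) : R :=
  (rho ^ 2 - 1) * Rmin (level k) x ^ 3 / level k ^ 2.

Definition potential (n : nat) (x : R) : R := sum_f_R0 (fun k => level_potential k x) n.

Lemma potential_diff n a b : potential n b - potential n a =
  sum_f_R0 (fun k => level_potential k b - level_potential k a) n.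
Proof. unfold potential. rewrite minus_sum. auto. Qed.

Lemma level_potential_const k a b : level k <= a -> level k <= b ->
  level_potential k b - level_potential k a = 0.
Proof.
  intros Ha Hb. unfold level_potential. rewrite (Rmin_left _ a), (Rmin_left _ b) by auto. ring.
Qed.

Lemma level_potential_diff_le m k a b : (m <= k)%nat -> 0 <= a <= b -> b <= level m ->
  level_potential k b - level_potential k a <= tail_weight m k * (3 * (b - a)).
Proof.
  intros Hmk Hab Hbm. unfold tail_weight. destruct (le_dec m k); [|lia].
  pose proof (level_le m k Hmk). pose proof (level_pos k).
  unfold level_potential. rewrite (Rmin_right _ a), (Rmin_right _ b) by lra.
  replace ((rho ^ 2 - 1) * b ^ 3 / level k ^ 2 - (rho ^ 2 - 1) * a ^ 3 / level k ^ 2)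
    with ((rho ^ 2 - 1) / level k ^ 2 * (b ^ 3 - a ^ 3)) by (field; lra).
  replace ((rho ^ 2 - 1) * level m ^ 2 / level k ^ 2 * (3 * (b - a)))
    with ((rho ^ 2 - 1) / level k ^ 2 * (3 * level m ^ 2 * (b - a))) by (field; lra).
  apply Rmult_le_compat_l.
  - apply Rlt_le, Rdiv_lt_0_compat; [nra | apply pow_lt; auto].
  - assert (b ^ 2 <= level m ^ 2) by (apply pow_incr; lra).
    assert (0 <= (b - a) * ((b - a) * (2 * b + a))) by (apply Rmult_le_pos; nra).
    replace (b ^ 3 - a ^ 3) with (3 * b ^ 2 * (b - a) - (b - a) * ((b - a) * (2 * b + a))) by ring.
    nra.
Qed.

Lemma potential_cell n m a b : 0 <= a <= b -> b <= level m ->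
  (forall k, (k < m)%nat -> level k <= a) -> potential n b - potential n a <= 3 * rho ^ 2 * (b - a).
Proof.
  intros Hab Hbm Hbelow. rewrite potential_diff.
  apply Rle_trans with (sum_f_R0 (fun k => tail_weight m k * (3 * (b - a))) n).
  - apply sum_Rle. intros k _. destruct (le_dec m k).
    + apply level_potential_diff_le; auto.
    + unfold tail_weight. destruct (le_dec m k); [lia|].
      rewrite level_potential_const; [lra | apply Hbelow; lia|].
      pose proof (Hbelow k ltac:(lia)). lra.
  - rewrite <- scal_sum. pose proof (tail_weight_sum_le m n). nra.
Qed.

Lemma potential_lipschitz n a b : 0 <= a <= b ->
  potential n b - potential n a <= 3 * rho ^ 2 * (b - a).
Proof.
  apply (one_sided_lipschitz_glue (potential n) _ level n).
  - intros a0 b0 Hab Hb. apply (potential_cell n 0); auto. intros; lia.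
  - intros j a0 b0 _ Hab Hb. apply (potential_cell n (S j)); auto; [pose proof (level_pos j); lra|].
    intros k Hk. pose proof (level_le k j ltac:(lia)). lra.
  - intros a0 b0 Hab. rewrite potential_diff, sum_eq_R0; [pose proof (pow2_ge_0 rho); nra|].
    intros k Hk. pose proof (level_le k n Hk). apply level_potential_const; lra.
Qed.

Lemma level_cutoff_diff_sq_le k a b : 0 <= a <= b ->
  level_weight k * (cutoff (level k) b - cutoff (level k) a) ^ 2
  <= (level_potential k b - level_potential k a) * (4 / 3 * (b - a)).
Proof.
  intros Hab. pose proof (level_pos k) as Hk.
  pose proof (cutoff_diff_sq_le (level k) a b Hk Hab).
  set (r := (rho ^ 2 - 1) / level k ^ 2).
  assert (Hr : 0 <= r) by (apply Rlt_le, Rdiv_lt_0_compat; [nra | apply pow_lt; auto]).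
  replace (level_weight k * (cutoff (level k) b - cutoff (level k) a) ^ 2)
    with (r * (level k ^ 4 * (cutoff (level k) b - cutoff (level k) a) ^ 2))
    by (unfold r, level_weight; field; lra).
  replace ((level_potential k b - level_potential k a) * (4 / 3 * (b - a)))
    with (r * (4 / 3 * (b - a) * (Rmin (level k) b ^ 3 - Rmin (level k) a ^ 3)))
    by (unfold r, level_potential; field; lra).
  apply Rmult_le_compat_l; auto.
Qed.

Lemma cutoff_levels_edge_le n a b : 0 <= a -> 0 <= b ->
  sum_f_R0 (fun k => level_weight k * (cutoff (level k) a - cutoff (level k) b) ^ 2) n
  <= 4 * rho ^ 2 * (a - b) ^ 2.
Proof.
  assert (Hle : forall a b, 0 <= a <= b ->
    sum_f_R0 (fun k => level_weight k * (cutoff (level k) b - cutoff (level k) a) ^ 2) n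
    <= 4 * rho ^ 2 * (b - a) ^ 2).
  { intros a0 b0 Hab.
    apply Rle_trans with
      (sum_f_R0 (fun k => (level_potential k b0 - level_potential k a0) * (4 / 3 * (b0 - a0))) n).
    - apply sum_Rle. intros k _. apply level_cutoff_diff_sq_le; auto.
    - rewrite <- scal_sum, <- potential_diff.
      pose proof (potential_lipschitz n a0 b0 Hab). nra. }
  intros Ha Hb. destruct (Rle_dec b a).
  - apply Hle. lra.
  - rewrite (sum_eq _ (fun k => level_weight k * (cutoff (level k) b - cutoff (level k) a) ^ 2))
      by (intros; ring).
    replace ((a - b) ^ 2) with ((b - a) ^ 2) by ring. apply Hle. lra.
Qed.

Definition layer_sum (n : nat) (y : R) : R :=
  sum_f_R0 (fun k => level_weight k * (if Rlt_dec (level k) y then 1 else 0)) n.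

Lemma layer_sum_ge n y : 0 <= y -> Rmin y (level (S n)) ^ 2 - c ^ 2 <= layer_sum n y.
Proof.
  intros Hy. unfold layer_sum.
  assert (Hmin : forall t, 0 < t -> 0 <= Rmin y t) by (intros t Ht; apply Rmin_glb; lra).
  induction n as [|n IH].
  - cbn [sum_f_R0]. pose proof (level_pos 1).
    assert (E : level 1 ^ 2 = c ^ 2 + level_weight 0) by (unfold level_weight, level; ring).
    destruct (Rlt_dec (level 0) y).
    + assert (Rmin y (level 1) ^ 2 <= level 1 ^ 2)
        by (apply pow_incr; split; [apply Hmin; lra | apply Rmin_r]). lra.
    + assert (Rmin y (level 1) ^ 2 <= c ^ 2); [|pose proof (level_weight_nonneg 0); lra].
      apply pow_incr. split; [apply Hmin; lra|].
      replace c with (level 0) by (unfold level; ring). pose proof (Rmin_l y (level 1)). lra.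
  - rewrite tech5. pose proof (level_pos (S n)). pose proof (level_le (S n) (S (S n)) ltac:(lia)).
    destruct (Rlt_dec (level (S n)) y).
    + rewrite (Rmin_right y (level (S n))) in IH by lra.
      assert (E : level (S (S n)) ^ 2 = level (S n) ^ 2 + level_weight (S n))
        by (unfold level_weight; rewrite (level_S (S n)); ring).
      assert (Rmin y (level (S (S n))) ^ 2 <= level (S (S n)) ^ 2)
        by (apply pow_incr; split; [apply Hmin; lra | apply Rmin_r]). lra.
    + rewrite (Rmin_left y (level (S n))) in IH by lra.
      rewrite (Rmin_left y (level (S (S n)))) by lra. lra.
Qed.

End Levels.

(** * Truncations, variance and medians *)

Lemma le_of_le_plus_slack (X Y K : R) : (forall d, 0 < d <= 1 -> X <= Y + d * K) -> X <= Y.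
Proof.
  intros H. apply Rle_plus_epsilon. intros e He. pose proof (Rabs_pos K).
  set (d := Rmin 1 (e / (Rabs K + 1))).
  assert (Hd : 0 < d <= 1)
    by (split; [apply Rmin_glb_lt; [lra | apply Rdiv_lt_0_compat; lra] | apply Rmin_l]).
  assert (d * (Rabs K + 1) <= e).
  { apply Rle_trans with (e / (Rabs K + 1) * (Rabs K + 1)); [|right; field; lra].
    apply Rmult_le_compat_r; [lra | apply Rmin_r]. }
  pose proof (H d Hd). pose proof (Rle_abs K). nra.
Qed.

Lemma bounded_on_list {T : Type} (g : T -> R) (L : list T) : exists M, forall x, In x L -> g x <= M.
Proof.
  induction L as [|a L [M HM]]; [exists 0; simpl; tauto|].
  exists (Rmax (g a) M). intros x [<-|Hx]; [apply Rmax_l|].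
  eapply Rle_trans; [apply HM; auto | apply Rmax_r].
Qed.

Lemma nat_first_crossing (P : nat -> Prop) (N : nat) : ~ P 0%nat -> P N ->
  exists k, ~ P k /\ P (S k).
Proof.
  intros H0. induction N as [|N IH]; intros HN; [contradiction|].
  destruct (classic (P N)) as [HPN|HPN]; [apply IH; auto | exists N; auto].
Qed.

Lemma Summable_weighted_sq {T : Type} (w f u : T -> R) (a : R) :
  (forall x, 0 <= w x) -> Summable w -> Summable (fun x => w x * f x ^ 2) ->
  (forall x, u x ^ 2 <= 2 * f x ^ 2 + 2 * a ^ 2) -> Summable (fun x => w x * u x ^ 2).
Proof.
  intros Hw Sw Sf Hu. apply (Summable_dominated _ (fun x => 2 * (w x * f x ^ 2) + 2 * a ^ 2 * w x)).
  - intros x. rewrite Rabs_right by (apply Rle_ge, Rmult_le_pos; auto; apply pow2_ge_0).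
    specialize (Hu x). specialize (Hw x). nra.
  - apply Summable_plus; apply Summable_scal; auto.
Qed.

Lemma sq_pos_part_le y m : Rmax (y - m) 0 ^ 2 <= 2 * y ^ 2 + 2 * m ^ 2.
Proof.
  unfold Rmax. pose proof (pow2_ge_0 (y + m)). pose proof (pow2_ge_0 y).
  destruct (Rle_dec (y - m) 0); nra.
Qed.

Lemma sq_le_truncations y m d : 0 < d <= 1 ->
  (y - m) ^ 2 <= Rmax (y - m) 0 ^ 2 + (1 + d) * Rmax (m - d - y) 0 ^ 2 + 2 * d.
Proof.
  intros Hd. unfold Rmax. destruct (Rle_dec (y - m) 0), (Rle_dec (m - d - y) 0).
  - assert ((y - m) ^ 2 <= d ^ 2) by (apply pow_maj_Rabs; rewrite Rabs_left1; lra). nra.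
  - assert (0 <= d * (m - d - y - 1) ^ 2) by (apply Rmult_le_pos; [lra | apply pow2_ge_0]).
    replace (y - m) with (- ((m - d - y) + d)) by ring. nra.
  - nra.
  - lra.
Qed.

Lemma truncations_edge_le a b m m' : m' <= m ->
  (Rmax (a - m) 0 - Rmax (b - m) 0) ^ 2 + (Rmax (m' - a) 0 - Rmax (m' - b) 0) ^ 2 <= (a - b) ^ 2.
Proof.
  assert (Hle : forall a b, m' <= m -> b <= a ->
    (Rmax (a - m) 0 - Rmax (b - m) 0) ^ 2 + (Rmax (m' - b) 0 - Rmax (m' - a) 0) ^ 2 <= (a - b) ^ 2).
  { intros a0 b0 Hm Hab.
    set (u := Rmax (a0 - m) 0 - Rmax (b0 - m) 0). set (v := Rmax (m' - b0) 0 - Rmax (m' - a0) 0).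
    assert (0 <= u /\ 0 <= v /\ u + v <= a0 - b0) as [Hu [Hv Huv]]
      by (unfold u, v, Rmax; destruct (Rle_dec (a0 - m) 0), (Rle_dec (b0 - m) 0),
            (Rle_dec (m' - a0) 0), (Rle_dec (m' - b0) 0); lra).
    assert ((u + v) ^ 2 <= (a0 - b0) ^ 2) by (apply pow_incr; lra). nra. }
  intros Hm. destruct (Rle_dec b a).
  - replace ((Rmax (m' - a) 0 - Rmax (m' - b) 0) ^ 2)
      with ((Rmax (m' - b) 0 - Rmax (m' - a) 0) ^ 2) by ring.
    apply Hle; lra.
  - replace ((a - b) ^ 2) with ((b - a) ^ 2) by ring.
    replace ((Rmax (a - m) 0 - Rmax (b - m) 0) ^ 2)
      with ((Rmax (b - m) 0 - Rmax (a - m) 0) ^ 2) by ring.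
    apply Hle; lra.
Qed.

Lemma clamp01_diff_sq_le a b : (Rmax 0 (Rmin 1 a) - Rmax 0 (Rmin 1 b)) ^ 2 <= (a - b) ^ 2.
Proof.
  rewrite <- (pow2_abs (_ - _)), <- (pow2_abs (a - b)). apply pow_incr. split; [apply Rabs_pos|].
  unfold Rmin. destruct (Rle_dec 1 a), (Rle_dec 1 b); unfold Rabs, Rmax;
  repeat match goal with
         | |- context [Rle_dec ?u ?v] => destruct (Rle_dec u v)
         | |- context [Rcase_abs ?u] => destruct (Rcase_abs u)
         end; lra.
Qed.

Definition superlevel {St : Type} (g : St -> R) (t : R) (x : St) : bool :=
  if Rlt_dec t (g x) then true else false.

Definition sublevel {St : Type} (g : St -> R) (t : R) (x : St) : bool :=
  if Rle_dec (g x) t then true else false.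

Section Variance.
Context {St : Type} (nu : St -> R) (Hnu : prob_measure nu).

Lemma Summable_nu_of_sq f : Summable (fun x => nu x * f x ^ 2) -> Summable (fun x => nu x * f x).
Proof.
  intros H. apply (Summable_dominated _ (fun x => nu x + nu x * f x ^ 2)).
  - intros x. pose proof (prob_nonneg nu Hnu x). rewrite Rabs_mult, (Rabs_right (nu x)) by lra.
    assert (Rabs (f x) <= 1 + f x ^ 2)
      by (rewrite <- (pow2_abs (f x)); pose proof (Rabs_pos (f x)); nra).
    nra.
  - apply Summable_plus; auto. apply Summable_prob; auto.
Qed.

Lemma HasSum_centered_sq f c : Summable (fun x => nu x * f x ^ 2) ->
  HasSum (fun x => nu x * (f x - c) ^ 2) (variance nu f + (sumS (fun x => nu x * f x) - c) ^ 2).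
Proof.
  intros H2. pose proof (Summable_nu_of_sq f H2) as H1.
  replace (variance nu f + (sumS (fun x => nu x * f x) - c) ^ 2)
    with (sumS (fun x => nu x * f x ^ 2) + (-2 * c) * sumS (fun x => nu x * f x) + c ^ 2 * 1)
    by (unfold variance; ring).
  eapply HasSum_ext.
  2:{ apply HasSum_plus; [apply HasSum_plus|].
      - apply HasSum_sumS; eauto.
      - apply HasSum_scal, HasSum_sumS; eauto.
      - apply HasSum_scal, Hnu. }
  intros x. simpl. ring.
Qed.

Lemma variance_le_centered f c : Summable (fun x => nu x * f x ^ 2) ->
  Summable (fun x => nu x * (f x - c) ^ 2) /\ variance nu f <= sumS (fun x => nu x * (f x - c) ^ 2).
Proof.
  intros H. pose proof (HasSum_centered_sq f c H) as V. split; [eexists; eauto|].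
  rewrite (sumS_eq _ _ V). pose proof (pow2_ge_0 (sumS (fun x => nu x * f x) - c)). lra.
Qed.

Lemma meas_le_twice_variance h A B :
  (forall x, A x = true -> B x = false) -> (forall x, A x = true -> h x = 1) ->
  (forall x, B x = true -> h x = 0) -> meas nu A <= / 2 -> / 2 <= meas nu B ->
  Summable (fun x => nu x * h x ^ 2) -> meas nu A <= 2 * variance nu h.
Proof.
  intros Hd H1 H0 HA HB Hs.
  set (c := sumS (fun x => nu x * h x)).
  pose proof (HasSum_centered_sq h c Hs) as V. fold c in V.
  rewrite Rminus_diag, pow_i, Rplus_0_r in V by lia.
  assert (Hsplit : (1 - c) ^ 2 * meas nu A + c ^ 2 * meas nu B <= variance nu h).
  { apply (HasSum_le (fun x => (1 - c) ^ 2 * restr nu A x + c ^ 2 * restr nu B x)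
                     (fun x => nu x * (h x - c) ^ 2)); auto.
    - intros x. unfold restr. pose proof (prob_nonneg nu Hnu x). pose proof (pow2_ge_0 (h x - c)).
      destruct (A x) eqn:EA; [rewrite (Hd x EA), (H1 x EA); lra|].
      destruct (B x) eqn:EB; [|nra].
      rewrite (H0 x EB). replace ((0 - c) ^ 2) with (c ^ 2) by ring. lra.
    - apply HasSum_plus; apply HasSum_scal; apply HasSum_meas; auto. }
  pose proof (meas_nonneg nu Hnu A). pose proof (pow2_ge_0 c). pose proof (pow2_ge_0 (2 * c - 1)).
  assert (c ^ 2 * meas nu B >= c ^ 2 * / 2) by nra.
  nra.
Qed.

Lemma fsum_nu_le_meas A L : NoDup L -> (forall x, In x L -> A x = true) -> fsum nu L <= meas nu A.
Proof.
  intros NL HL. rewrite (fsum_ext nu (restr nu A)); [apply fsum_restr_le_meas; auto|].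
  intros x Hx. unfold restr. rewrite HL; auto.
Qed.

Lemma approx_median f d : 0 < d ->
  exists m, / 2 <= meas nu (sublevel f m) /\ meas nu (sublevel f (m - d)) < / 2.
Proof.
  intros Hd. destruct (proj2 Hnu (/ 2) ltac:(lra)) as [L [NL HL]].
  specialize (HL L NL (incl_refl _)). apply Rabs_def2 in HL.
  destruct (bounded_on_list f L) as [T1 H1].
  destruct (bounded_on_list (fun x => - f x) L) as [T0 H0].
  set (P := fun k => / 2 <= meas nu (sublevel f (- T0 - 1 + INR k * d))).
  assert (HP0 : ~ P 0%nat).
  { unfold P. simpl. rewrite Rmult_0_l, Rplus_0_r.
    pose proof (meas_add_compl nu Hnu (sublevel f (- T0 - 1))).
    enough (fsum nu L <= meas nu (fun x => negb (sublevel f (- T0 - 1) x))) by lra.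
    apply fsum_nu_le_meas; auto. intros x Hx. specialize (H0 x Hx).
    unfold sublevel. destruct (Rle_dec (f x) (- T0 - 1)); auto. lra. }
  destruct (INR_unbounded ((T1 + T0 + 1) / d)) as [N HN].
  assert (HPN : P N).
  { unfold P. enough (fsum nu L <= meas nu (sublevel f (- T0 - 1 + INR N * d))) by lra.
    apply fsum_nu_le_meas; auto. intros x Hx. specialize (H1 x Hx).
    assert (T1 + T0 + 1 < INR N * d)
      by (apply (Rmult_lt_compat_r d) in HN; auto; field_simplify in HN; lra).
    unfold sublevel. destruct (Rle_dec (f x) _); auto. lra. }
  destruct (nat_first_crossing P N HP0 HPN) as [k [Hk HSk]].
  exists (- T0 - 1 + INR (S k) * d). split; auto.
  replace (- T0 - 1 + INR (S k) * d - d) with (- T0 - 1 + INR k * d) by (rewrite S_INR; ring).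
  unfold P in Hk. lra.
Qed.

End Variance.

(** * From (i) to (ii): the level-set inequality *)

Section VarToPI.
Context {St : Type} (p : St -> St -> R) (mu nu : St -> R)
  (Hp : stochastic p) (Hmu : prob_measure mu) (Hrev : reversible p mu) (Hnu : prob_measure nu)
  (Cvar : R) (HC : 0 <= Cvar) (Hcv : cond_var p mu nu Cvar).

Lemma nu_le_Cvar_mu x : nu x <= / 2 -> nu x <= Cvar * mu x.
Proof.
  intros Hx. set (A := fun y => if eq_dec_classic y x then true else false).
  rewrite <- (meas_singleton nu Hnu x). fold A.
  pose proof (meas_add_compl nu Hnu A). pose proof (meas_singleton nu Hnu x). fold A in H0.
  eapply Rle_trans; [apply (Hcv A (fun y => negb (A y))); [intros y -> | lra | lra]; auto|].
  apply Rmult_le_compat_l; auto.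
  eapply Rle_trans; [|apply (dirichlet_indicator_le p mu Hp Hmu Hrev x)].
  apply (cap_le_dirichlet p mu Hp Hmu Hrev).
  - intros y. unfold A. destruct (eq_dec_classic y x); auto; discriminate.
  - intros y. unfold A. destruct (eq_dec_classic y x); auto; discriminate.
  - apply (l2_bounded mu Hmu _ 1). intros y.
    destruct (eq_dec_classic y x); rewrite ?Rabs_R1, ?Rabs_R0; lra.
Qed.

(* At most one state carries nu-mass above 1/2; everywhere else nu <= Cvar mu. *)
Lemma Summable_nu_sq f : l2 mu f -> Summable (fun x => nu x * f x ^ 2).
Proof.
  intros Hf.
  set (h := fun x => if Rle_dec (nu x) (/ 2) then 0 else nu x * f x ^ 2).
  assert (Hh : Summable h).
  { destruct (classic (exists x, / 2 < nu x)) as [[x Hx]|Hn].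
    - exists (h x). apply HasSum_single_support. intros y Hy. unfold h.
      destruct (Rle_dec (nu y) (/ 2)); auto. exfalso.
      assert (fsum nu [y; x] <= 1)
        by (apply (fsum_prob_le_1 nu Hnu); repeat constructor; simpl; intuition).
      simpl in H. lra.
    - exists 0. eapply HasSum_ext; [|apply HasSum_0]. intros y. unfold h.
      destruct (Rle_dec (nu y) (/ 2)); auto. exfalso; apply Hn; exists y; lra. }
  apply (Summable_dominated _ (fun x => Cvar * (mu x * f x ^ 2) + h x)).
  - intros x. pose proof (prob_nonneg nu Hnu x). pose proof (prob_nonneg mu Hmu x).
    pose proof (pow2_ge_0 (f x)).
    rewrite Rabs_right by (apply Rle_ge, Rmult_le_pos; auto).
    unfold h. destruct (Rle_dec (nu x) (/ 2)).
    + pose proof (nu_le_Cvar_mu x r). nra.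
    + assert (0 <= Cvar * (mu x * f x ^ 2)) by (apply Rmult_le_pos; auto; nra). lra.
  - apply Summable_plus; auto. apply Summable_scal; auto.
Qed.

Section VanishingOnHalf.
Variable g : St -> R.
Hypotheses (Hg0 : forall x, 0 <= g x) (Hg : l2 mu g) (Hhalf : / 2 <= meas nu (sublevel g 0)).

Lemma meas_superlevel_le_half t : 0 < t -> meas nu (superlevel g t) <= / 2.
Proof.
  intros Ht. pose proof (meas_add_compl nu Hnu (sublevel g 0)).
  enough (meas nu (superlevel g t) <= meas nu (fun x => negb (sublevel g 0 x))) by lra.
  apply (meas_mono nu Hnu). intros x. unfold superlevel, sublevel.
  destruct (Rlt_dec t (g x)), (Rle_dec (g x) 0); auto; lra.
Qed.

Lemma l2_cutoff t : 0 < t -> l2 mu (fun x => cutoff t (g x)).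
Proof.
  intros Ht. apply (l2_bounded mu Hmu _ 1). intros x.
  pose proof (cutoff_bounds t (g x) Ht). rewrite Rabs_right; lra.
Qed.

Lemma meas_superlevel_le t : 0 < t ->
  meas nu (superlevel g t) <= Cvar * dirichlet p mu (fun x => cutoff t (g x)).
Proof.
  intros Ht.
  assert (Hzero : forall x, sublevel g 0 x = true -> g x = 0)
    by (intros x; unfold sublevel; destruct (Rle_dec (g x) 0); [pose proof (Hg0 x) | discriminate]; lra).
  eapply Rle_trans.
  - apply (Hcv (superlevel g t) (sublevel g 0)); auto; [|apply meas_superlevel_le_half; auto].
    intros x. unfold superlevel, sublevel.
    destruct (Rlt_dec t (g x)), (Rle_dec (g x) 0); auto; lra.
  - apply Rmult_le_compat_l; auto.
    apply (cap_le_dirichlet p mu Hp Hmu Hrev); [| |apply l2_cutoff; auto].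
    + intros x. unfold superlevel. destruct (Rlt_dec t (g x)); [|discriminate].
      intros _. apply cutoff_eq_1; auto.
    + intros x Hx. rewrite (Hzero x Hx). apply cutoff_0; auto.
Qed.

Section FixedLevels.
Variables (rho c : R).
Hypotheses (Hrho : 1 < rho) (Hc : 0 < c).

Lemma sum_dirichlet_cutoffs_le n :
  sum_f_R0 (fun k => level_weight rho c k * dirichlet p mu (fun x => cutoff (level rho c k) (g x))) n
  <= 4 * rho ^ 2 * dirichlet p mu g.
Proof.
  apply (sum_dirichlet_le p mu Hp Hmu (fun k x => cutoff (level rho c k) (g x))); auto.
  - intros k. apply (Summable_dir_term p mu Hp Hmu Hrev), l2_cutoff, level_pos; auto.
  - apply (Summable_dir_term p mu Hp Hmu Hrev); auto.
  - intros x y. apply cutoff_levels_edge_le; auto.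
Qed.

Lemma fsum_sq_le_layers n L : NoDup L -> (forall x, In x L -> g x <= level rho c (S n)) ->
  fsum (fun x => nu x * g x ^ 2) L
  <= sum_f_R0 (fun k => level_weight rho c k * meas nu (superlevel g (level rho c k))) n + c ^ 2.
Proof.
  intros NL HL.
  set (w := level_weight rho c). set (A := fun k => superlevel g (level rho c k)).
  apply Rle_trans with (fsum (fun x => sum_f_R0 (fun k => w k * restr nu (A k) x) n + c ^ 2 * nu x) L).
  - apply fsum_le. intros x Hx.
    replace (sum_f_R0 (fun k => w k * restr nu (A k) x) n) with (nu x * layer_sum rho c n (g x)).
    2:{ unfold layer_sum. rewrite scal_sum. apply sum_eq. intros k _.
        unfold restr, A, superlevel, w. destruct (Rlt_dec (level rho c k) (g x)); ring. }
    pose proof (layer_sum_ge rho c Hrho Hc n (g x) (Hg0 x)).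
    rewrite Rmin_left in H by (apply HL; auto). pose proof (prob_nonneg nu Hnu x). nra.
  - rewrite fsum_plus, fsum_scal, fsum_sum_f_R0. apply Rplus_le_compat.
    + apply sum_Rle. intros k _. rewrite fsum_scal.
      apply Rmult_le_compat_l; [apply level_weight_nonneg; auto | apply fsum_restr_le_meas; auto].
    + pose proof (fsum_prob_le_1 nu Hnu L NL). pose proof (pow2_ge_0 c). nra.
Qed.

Lemma nu_sq_le_plus eps : 0 < eps -> c ^ 2 <= eps / 2 ->
  sumS (fun x => nu x * g x ^ 2) <= 4 * rho ^ 2 * (Cvar * dirichlet p mu g) + eps.
Proof.
  intros Heps Hc2.
  destruct (HasSum_sumS _ (Summable_nu_sq g Hg) (eps / 2) ltac:(lra)) as [L [NL HL]].
  specialize (HL L NL (incl_refl _)). apply Rabs_def2 in HL.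
  destruct (bounded_on_list g L) as [M HM].
  destruct (level_unbounded rho c Hrho Hc M) as [n Hn].
  pose proof (fsum_sq_le_layers n L NL ltac:(intros x Hx; specialize (HM x Hx); lra)).
  assert (sum_f_R0 (fun k => level_weight rho c k * meas nu (superlevel g (level rho c k))) n
          <= Cvar * (4 * rho ^ 2 * dirichlet p mu g)).
  { eapply Rle_trans; [|apply Rmult_le_compat_l; [auto | apply (sum_dirichlet_cutoffs_le n)]].
    rewrite scal_sum. apply sum_Rle. intros k _.
    pose proof (meas_superlevel_le (level rho c k) (level_pos rho c Hrho Hc k)).
    pose proof (level_weight_nonneg rho c Hrho k). nra. }
  nra.
Qed.

End FixedLevels.

Lemma nu_sq_le_dirichlet : sumS (fun x => nu x * g x ^ 2) <= 4 * (Cvar * dirichlet p mu g).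
Proof.
  set (Y := Cvar * dirichlet p mu g).
  assert (HY : 0 <= Y) by (apply Rmult_le_pos; auto; apply (dirichlet_nonneg p mu Hp Hmu Hrev); auto).
  apply (le_of_le_plus_slack _ _ (12 * Y + 1)). intros d Hd.
  pose proof (nu_sq_le_plus (1 + d) (d / 2) ltac:(lra) ltac:(lra) d ltac:(lra) ltac:(nra)).
  assert ((1 + d) ^ 2 <= 1 + 3 * d) by nra.
  fold Y in H. nra.
Qed.

End VanishingOnHalf.

Lemma l2_pos_part f m : l2 mu f -> l2 mu (fun x => Rmax (f x - m) 0).
Proof.
  intros Hf. apply (Summable_weighted_sq mu f _ m); auto;
    [apply (prob_nonneg mu Hmu) | apply (Summable_prob mu Hmu) | intros; apply sq_pos_part_le].
Qed.

Lemma l2_neg_part f m : l2 mu f -> l2 mu (fun x => Rmax (m - f x) 0).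
Proof.
  intros Hf. apply (Summable_weighted_sq mu f _ m); auto;
    [apply (prob_nonneg mu Hmu) | apply (Summable_prob mu Hmu)|].
  intros x. pose proof (sq_pos_part_le m (f x)). lra.
Qed.

Lemma dirichlet_truncations_le f m m' : l2 mu f -> m' <= m ->
  dirichlet p mu (fun x => Rmax (f x - m) 0) + dirichlet p mu (fun x => Rmax (m' - f x) 0)
  <= dirichlet p mu f.
Proof.
  intros Hf Hm.
  pose proof (sum_dirichlet_le p mu Hp Hmu
    (fun k x => if Nat.eqb k 0 then Rmax (f x - m) 0 else Rmax (m' - f x) 0) (fun _ => 1) f 1 1) as H.
  simpl in H. rewrite !Rmult_1_l in H. apply H.
  - intros k. apply (Summable_dir_term p mu Hp Hmu Hrev).
    destruct (Nat.eqb k 0); [apply l2_pos_part | apply l2_neg_part]; auto.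
  - apply (Summable_dir_term p mu Hp Hmu Hrev); auto.
  - intros x y. simpl. rewrite !Rmult_1_l. apply truncations_edge_le; auto.
Qed.

Lemma nu_centered_sq_le_truncations f m d : l2 mu f -> 0 < d <= 1 ->
  sumS (fun x => nu x * (f x - m) ^ 2)
  <= sumS (fun x => nu x * Rmax (f x - m) 0 ^ 2)
     + (1 + d) * sumS (fun x => nu x * Rmax (m - d - f x) 0 ^ 2) + 2 * d.
Proof.
  intros Hf Hd. rewrite <- (Rmult_1_r (2 * d)).
  apply (HasSum_le (fun x => nu x * (f x - m) ^ 2)
    (fun x => nu x * Rmax (f x - m) 0 ^ 2 + (1 + d) * (nu x * Rmax (m - d - f x) 0 ^ 2) + 2 * d * nu x)).
  - intros x. pose proof (prob_nonneg nu Hnu x). pose proof (sq_le_truncations (f x) m d Hd). nra.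
  - apply HasSum_sumS, (variance_le_centered nu Hnu f m), Summable_nu_sq; auto.
  - apply HasSum_plus; [apply HasSum_plus|]; [| apply HasSum_scal | apply HasSum_scal, Hnu];
      apply HasSum_sumS, Summable_nu_sq; [apply l2_pos_part | apply l2_neg_part]; auto.
Qed.

(* Around an approximate median m, (f - m)_+ and (m - d - f)_+ vanish on sets of mass >= 1/2. *)
Lemma variance_le_plus f d : l2 mu f -> 0 < d <= 1 ->
  variance nu f <= 4 * Cvar * dirichlet p mu f + d * (4 * Cvar * dirichlet p mu f + 2).
Proof.
  intros Hf Hd.
  destruct (approx_median nu Hnu f d) as [m [Hm Hm']]; [lra|].
  set (gp := fun x => Rmax (f x - m) 0). set (gm := fun x => Rmax (m - d - f x) 0).
  assert (Pp : sumS (fun x => nu x * gp x ^ 2) <= 4 * (Cvar * dirichlet p mu gp)).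
  { apply nu_sq_le_dirichlet; [intros; apply Rmax_r | apply l2_pos_part; auto|].
    eapply Rle_trans; [apply Hm | apply (meas_mono nu Hnu)]. intros x. unfold sublevel, gp.
    destruct (Rle_dec (f x) m), (Rle_dec (Rmax (f x - m) 0) 0); auto.
    rewrite Rmax_right in n by lra. lra. }
  assert (Pm : sumS (fun x => nu x * gm x ^ 2) <= 4 * (Cvar * dirichlet p mu gm)).
  { apply nu_sq_le_dirichlet; [intros; apply Rmax_r | apply l2_neg_part; auto|].
    pose proof (meas_add_compl nu Hnu (sublevel f (m - d))).
    enough (meas nu (fun x => negb (sublevel f (m - d) x)) <= meas nu (sublevel gm 0)) by lra.
    apply (meas_mono nu Hnu). intros x. unfold sublevel, gm.
    destruct (Rle_dec (f x) (m - d)), (Rle_dec (Rmax (m - d - f x) 0) 0); auto.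
    rewrite Rmax_right in n0 by lra. lra. }
  pose proof (dirichlet_truncations_le f m (m - d) Hf ltac:(lra)) as Eboth. fold gp gm in Eboth.
  pose proof (nu_centered_sq_le_truncations f m d Hf Hd) as Hsplit.
  destruct (variance_le_centered nu Hnu f m (Summable_nu_sq f Hf)) as [_ Hv].
  pose proof (dirichlet_nonneg p mu Hp Hmu Hrev gp (l2_pos_part f m Hf)).
  pose proof (dirichlet_nonneg p mu Hp Hmu Hrev gm (l2_neg_part f (m - d) Hf)).
  assert (Cvar * (dirichlet p mu gp + dirichlet p mu gm) <= Cvar * dirichlet p mu f)
    by (apply Rmult_le_compat_l; lra).
  assert (d * (Cvar * dirichlet p mu gm) <= d * (Cvar * dirichlet p mu f))
    by (apply Rmult_le_compat_l; [lra | apply Rmult_le_compat_l; lra]).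
  assert ((1 + d) * sumS (fun x => nu x * gm x ^ 2) <= (1 + d) * (4 * (Cvar * dirichlet p mu gm)))
    by (apply Rmult_le_compat_l; lra).
  unfold gp, gm in *. nra.
Qed.

Lemma var_implies_PI : cond_PI p mu nu (4 * Cvar).
Proof.
  intros f Hf. split; [apply Summable_nu_sq; auto|].
  apply (le_of_le_plus_slack _ _ (4 * Cvar * dirichlet p mu f + 2)).
  intros d Hd. apply variance_le_plus; auto.
Qed.

End VarToPI.

(** * From (ii) to (i) *)

Section PIToVar.
Context {St : Type} (p : St -> St -> R) (mu nu : St -> R)
  (Hp : stochastic p) (Hmu : prob_measure mu) (Hrev : reversible p mu) (Hnu : prob_measure nu)
  (CPI : R) (HP : 0 <= CPI) (Hpi : cond_PI p mu nu CPI).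

Lemma PI_implies_var : cond_var p mu nu (2 * CPI).
Proof.
  intros A B Hd HA HB.
  destruct (classic (exists x, A x = true)) as [Hne|Hemp].
  2:{ assert (HA0 : forall x, A x = false)
        by (intros x; destruct (A x) eqn:E; auto; exfalso; apply Hemp; exists x; auto).
      rewrite (cap_empty p mu A B HA0), (meas_empty nu Hnu A HA0). lra. }
  apply (le_scaled_cap p mu Hp Hmu Hrev); auto; [lra|].
  intros e [g [G1 [G0 Ge]]].
  set (h := fun x => Rmax 0 (Rmin 1 (g x))).
  assert (Hh : l2 mu h).
  { apply (l2_bounded mu Hmu h 1). intros x. unfold h.
    pose proof (Rmin_l 1 (g x)). pose proof (Rmax_l 0 (Rmin 1 (g x))).
    rewrite Rabs_right by lra. apply Rmax_lub; lra. }
  destruct (Hpi h Hh) as [Hs Hv].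
  assert (Eh : dirichlet p mu h <= e).
  { rewrite <- (sumS_eq _ _ Ge).
    pose proof (sum_dirichlet_le p mu Hp Hmu (fun _ => h) (fun _ => 1) g 0 1) as H.
    simpl in H. rewrite !Rmult_1_l in H. apply H.
    - intros _. apply (Summable_dir_term p mu Hp Hmu Hrev); auto.
    - exists e; auto.
    - intros x y. simpl. rewrite !Rmult_1_l. apply clamp01_diff_sq_le. }
  assert (Hvar : meas nu A <= 2 * variance nu h).
  { apply (meas_le_twice_variance nu Hnu h A B); auto.
    - intros x Hx. unfold h. rewrite (G1 x Hx), Rmin_left, Rmax_right; lra.
    - intros x Hx. unfold h. rewrite (G0 x Hx), Rmin_right, Rmax_left; lra. }
  assert (CPI * dirichlet p mu h <= CPI * e) by (apply Rmult_le_compat_l; auto).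
  lra.
Qed.

End PIToVar.

Theorem mainTheorem10 (S : Type) (p : S -> S -> R) (mu nu : S -> R)
  (HS : countable S) (Hp : stochastic p) (Hirr : irreducible p)
  (Hmu : prob_measure mu) (Hinv : invariant p mu) (Hrev : reversible p mu)
  (Hnu : prob_measure nu) :
  (forall Cvar : R, 0 <= Cvar -> cond_var p mu nu Cvar -> cond_PI p mu nu (4 * Cvar)) /\
  (forall CPI : R, 0 <= CPI -> cond_PI p mu nu CPI -> cond_var p mu nu (2 * CPI)).
Proof.
  split.
  - intros Cvar HC Hcv. exact (var_implies_PI p mu nu Hp Hmu Hrev Hnu Cvar HC Hcv).
  - intros CPI HP Hpi. exact (PI_implies_var p mu nu Hp Hmu Hrev Hnu CPI HP Hpi).
Qed.
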